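(* Let $\varepsilon\in(0,1)$ and let $\tau,\alpha,f_0,g$ be as defined in the context. For every $x\in\{0,1\}^n$ with $f(x)\ge f_0$, \[E[g(\mathcal{M}(x))]\le\frac{1}{e}(1+\varepsilon)\,g(x).\]
   Context: $f$ is OneMax, $f(x)=\sum_i x_i$. $\mathcal{M}$ is standard bit mutation: $\mathcal{M}(x)$ flips each bit of $x$ independently with probability $1/n$. Potential function: $\tau=\frac{4e}{\varepsilon}$, $\alpha=1-\frac1\tau\ln\big(1+\frac1\tau\big)$ (which lies in $(\tfrac34,1)$), $f_0=\lceil\alpha n\rceil$, and $g:\{0,1\}^n\to\mathbb{R}$ is $g(x)=\tau^{f(x)-f_0}$ if $f(x)\ge f_0$ and $g(x)=0$ otherwise. *)

From Stdlib Require Import Reals Lra Lia ZArith List.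
Open Scope R_scope.

Fixpoint bitstrings (n : nat) : list (list bool) :=
  match n with
  | O => nil :: nil
  | S m => map (cons true) (bitstrings m) ++ map (cons false) (bitstrings m)
  end.

Definition onemax (x : list bool) : nat := count_occ Bool.bool_dec x true.

(* probability that standard bit mutation (each bit flipped independently
   with prob. 1/n) turns x into y, for x y of length n *)
Fixpoint mut_prob_aux (p : R) (x y : list bool) : R :=
  match x, y with
  | a :: x', b :: y' =>
      (if Bool.eqb a b then 1 - p else p) * mut_prob_aux p x' y'
  | _, _ => 1
  end.

Definition mut_prob (n : nat) (x y : list bool) : R := mut_prob_aux (/ INR n) x y.

Definition sumR (l : list R) : R := fold_right Rplus 0 l.

Definition expect_mut (n : nat) (h : list bool -> R) (x : list bool) : R :=
  sumR (map (fun y => mut_prob n x y * h y) (bitstrings n)).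

Definition Rceil (r : R) : Z := (- Int_part (- r))%Z.

Definition tau (eps : R) : R := 4 * exp 1 / eps.
Definition alpha (eps : R) : R := 1 - / tau eps * ln (1 + / tau eps).
Definition f0 (eps : R) (n : nat) : Z := Rceil (alpha eps * INR n).

Definition g (eps : R) (n : nat) (x : list bool) : R :=
  if Z.leb (f0 eps n) (Z.of_nat (onemax x))
  then powerRZ (tau eps) (Z.of_nat (onemax x) - f0 eps n)
  else 0.

(* Write t = tau eps, p = 1/n, and for x let k = onemax x, z = #zeros of x.
   1. Since g y <= t^(f y - f0) for every y, with equality at x, it suffices
      to bound E[t^(f(M x))].  Bits mutate independently, so this is the
      product generating function ((1-p) t + p)^k (p t + 1 - p)^z
      = t^k (1 - p (1 - 1/t))^k (1 + p (t - 1))^z.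
   2. By 1 + u <= e^u the last two factors are at most
      exp(-p k (1 - 1/t) + p z (t - 1)).  Using p (k + z) = 1 and
      p z t <= (1 - alpha) t = ln(1 + 1/t) (a consequence of f x >= f0),
      the exponent is at most -1 + 1/t + ln(1 + 1/t).
   3. Finally e^(1/t) (1 + 1/t) <= (1 + 1/t)/(1 - 1/t) <= 1 + eps because
      1/t < eps/8 (as e > 2), giving the factor (1 + eps)/e. *)

From Stdlib Require Import Reals ZArith List Lra Lia.
Open Scope R_scope.

Definition zeros (x : list bool) : nat := count_occ Bool.bool_dec x false.

Lemma onemax_plus_zeros (x : list bool) : (onemax x + zeros x)%nat = length x.
Proof.
  induction x as [|a x IH]; [reflexivity|].
  destruct a; unfold onemax, zeros in *; simpl; lia.
Qed.

Lemma sumR_app (l1 l2 : list R) : sumR (l1 ++ l2) = sumR l1 + sumR l2.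
Proof. induction l1 as [|a l1 IH]; simpl; [lra | rewrite IH; lra]. Qed.

Lemma sumR_scale {A : Type} (c : R) (f : A -> R) (l : list A) :
  sumR (map (fun y => c * f y) l) = c * sumR (map f l).
Proof. induction l as [|a l IH]; simpl; [lra | rewrite IH; lra]. Qed.

Lemma sumR_le {A : Type} (f h : A -> R) (l : list A) :
  (forall y, f y <= h y) -> sumR (map f l) <= sumR (map h l).
Proof.
  intros Hfh; induction l as [|a l IH]; simpl; [lra|].
  specialize (Hfh a); lra.
Qed.

Lemma mut_prob_aux_nonneg (p : R) (x y : list bool) :
  0 <= p <= 1 -> 0 <= mut_prob_aux p x y.
Proof.
  intros Hp; revert y; induction x as [|a x IH]; intros [|b y]; simpl; try lra.
  apply Rmult_le_pos; [destruct (Bool.eqb a b); lra | apply IH].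
Qed.

(* Generating function of the number of ones after mutation with flip rate p:
   each one-bit contributes (1-p) t + p, each zero-bit p t + (1-p). *)
Lemma mutation_generating_function (p t : R) (x : list bool) :
  sumR (map (fun y => mut_prob_aux p x y * t ^ onemax y) (bitstrings (length x)))
  = ((1 - p) * t + p) ^ onemax x * (p * t + (1 - p)) ^ zeros x.
Proof.
  induction x as [|a x IH].
  - unfold onemax; simpl; lra.
  - simpl bitstrings. rewrite map_app, !map_map, sumR_app.
    rewrite (map_ext
      (fun y => mut_prob_aux p (a :: x) (true :: y) * t ^ onemax (true :: y))
      (fun y => ((if Bool.eqb a true then 1 - p else p) * t) *
                (mut_prob_aux p x y * t ^ onemax y))).
    2:{ intros y. cbn [mut_prob_aux].
        change (onemax (true :: y)) with (S (onemax y)). cbn [pow]. ring. }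
    rewrite (map_ext
      (fun y => mut_prob_aux p (a :: x) (false :: y) * t ^ onemax (false :: y))
      (fun y => (if Bool.eqb a false then 1 - p else p) *
                (mut_prob_aux p x y * t ^ onemax y))).
    2:{ intros y. cbn [mut_prob_aux].
        change (onemax (false :: y)) with (onemax y). ring. }
    rewrite !sumR_scale, IH.
    destruct a; unfold onemax, zeros; simpl; fold (onemax x) (zeros x); ring.
Qed.

Lemma g_le_pow (eps : R) (n : nat) (y : list bool) : 0 < tau eps ->
  g eps n y <= tau eps ^ onemax y * powerRZ (tau eps) (- f0 eps n).
Proof.
  intros Ht. unfold g.
  destruct (Z.leb (f0 eps n) (Z.of_nat (onemax y))).
  - rewrite pow_powerRZ, <- powerRZ_add by lra. right. f_equal.
  - apply Rlt_le, Rmult_lt_0_compat; [apply pow_lt | apply powerRZ_lt]; lra.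
Qed.

Lemma g_eq_pow (eps : R) (n : nat) (x : list bool) : 0 < tau eps ->
  (f0 eps n <= Z.of_nat (onemax x))%Z ->
  g eps n x = tau eps ^ onemax x * powerRZ (tau eps) (- f0 eps n).
Proof.
  intros Ht Hf. unfold g. apply Z.leb_le in Hf. rewrite Hf.
  rewrite pow_powerRZ, <- powerRZ_add by lra. f_equal.
Qed.

Lemma expect_g_le (eps : R) (n : nat) (x : list bool) :
  0 < tau eps -> (1 <= n)%nat -> length x = n ->
  expect_mut n (g eps n) x <=
  powerRZ (tau eps) (- f0 eps n) *
  ((1 - / INR n) * tau eps + / INR n) ^ onemax x *
  (/ INR n * tau eps + (1 - / INR n)) ^ zeros x.
Proof.
  intros Ht Hn Hl.
  assert (Hp : 0 <= / INR n <= 1).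
  { apply (le_INR 1 n) in Hn. simpl in Hn. split.
    - apply Rlt_le, Rinv_0_lt_compat; lra.
    - rewrite <- Rinv_1. apply Rinv_le_contravar; lra. }
  unfold expect_mut.
  eapply Rle_trans.
  - apply (sumR_le _ (fun y => powerRZ (tau eps) (- f0 eps n) *
                               (mut_prob n x y * tau eps ^ onemax y))).
    intros y. rewrite (Rmult_comm (powerRZ _ _)), Rmult_assoc.
    apply Rmult_le_compat_l; [apply mut_prob_aux_nonneg, Hp | apply g_le_pow, Ht].
  - rewrite sumR_scale. unfold mut_prob.
    rewrite <- Hl, mutation_generating_function, Hl. right; ring.
Qed.

Lemma pow_le_exp (u : R) (k : nat) : 0 <= 1 + u -> (1 + u) ^ k <= exp (INR k * u).
Proof.
  intros Hu. induction k as [|k IH].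
  - simpl. rewrite Rmult_0_l, exp_0. lra.
  - rewrite S_INR, Rmult_plus_distr_r, Rmult_1_l, exp_plus. simpl pow.
    rewrite Rmult_comm. apply Rmult_le_compat; [apply pow_le | | exact IH |]; try lra.
    apply exp_ineq1_le.
Qed.

Lemma exponent_bound (t a b L : R) :
  1 < t -> a + b = 1 -> 0 <= b -> b * t <= L ->
  - (a * (1 - / t)) + b * (t - 1) <= - (1 - / t) + L.
Proof.
  intros Ht Hab Hb HbL.
  assert (Hinv : 0 < / t) by (apply Rinv_0_lt_compat; lra).
  replace a with (1 - b) by lra.
  assert (0 <= b * / t) by (apply Rmult_le_pos; lra).
  nra.
Qed.

Lemma mutation_factor_bound (t p L : R) (k z : nat) :
  1 < t -> 0 < p <= 1 -> p * INR (k + z) = 1 -> p * INR z * t <= L ->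
  (1 - p * (1 - / t)) ^ k * (1 + p * (t - 1)) ^ z <= exp (- (1 - / t) + L).
Proof.
  intros Ht Hp Hpn HzL.
  assert (Hinv : 0 < / t < 1).
  { split; [apply Rinv_0_lt_compat; lra|].
    rewrite <- Rinv_1. apply Rinv_lt_contravar; lra. }
  replace (1 - p * (1 - / t)) with (1 + - (p * (1 - / t))) by ring.
  eapply Rle_trans.
  { apply Rmult_le_compat; [apply pow_le; nra | apply pow_le; nra
      | apply pow_le_exp; nra | apply pow_le_exp; nra]. }
  rewrite <- exp_plus.
  assert (Hexp : INR k * - (p * (1 - / t)) + INR z * (p * (t - 1))
                 <= - (1 - / t) + L).
  { rewrite plus_INR in Hpn.
    replace (INR k * - (p * (1 - / t)) + INR z * (p * (t - 1)))
      with (- ((p * INR k) * (1 - / t)) + (p * INR z) * (t - 1)) by ring.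
    apply exponent_bound; try lra.
    apply Rmult_le_pos; [lra | apply pos_INR]. }
  destruct (Rle_lt_or_eq_dec _ _ Hexp) as [Hlt|Heq].
  - apply Rlt_le, exp_increasing, Hlt.
  - rewrite Heq; lra.
Qed.

Lemma final_constant_bound (eps u : R) :
  0 < eps < 1 -> 0 < u <= eps / 8 ->
  exp (- (1 - u) + ln (1 + u)) <= / exp 1 * (1 + eps).
Proof.
  intros He Hu.
  replace (- (1 - u) + ln (1 + u)) with (- (1) + (u + ln (1 + u))) by ring.
  rewrite exp_plus, exp_Ropp, exp_plus, exp_ln by lra.
  assert (Hexp_u : exp u * (1 - u) <= 1).
  { pose proof (exp_ineq1_le (- u)).
    apply Rle_trans with (exp u * exp (- u)).
    - apply Rmult_le_compat_l; [apply Rlt_le, exp_pos | lra].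
    - rewrite <- exp_plus, Rplus_opp_r, exp_0; lra. }
  assert (Hmain : exp u * (1 + u) <= 1 + eps).
  { pose proof (exp_pos u). nra. }
  pose proof (Rinv_0_lt_compat _ (exp_pos 1)).
  apply Rmult_le_compat_l; lra.
Qed.

(* Since e > 2, tau eps = 4e/eps exceeds 8/eps, so 1/tau lies in (0, eps/8]
   and in particular tau > 1. *)
Lemma inv_tau_small (eps : R) : 0 < eps < 1 -> 0 < / tau eps <= eps / 8 /\ 1 < tau eps.
Proof.
  intros He.
  assert (H8 : 0 < 8 / eps)
    by (unfold Rdiv; apply Rmult_lt_0_compat; [lra | apply Rinv_0_lt_compat; lra]).
  assert (Ht8 : 8 / eps < tau eps).
  { unfold tau. assert (2 < exp 1) by (pose proof (exp_ineq1 1 ltac:(lra)); lra).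
    unfold Rdiv. apply Rmult_lt_compat_r; [apply Rinv_0_lt_compat|]; lra. }
  assert (Hinv : 0 < / tau eps <= eps / 8).
  { split; [apply Rinv_0_lt_compat; lra|].
    replace (eps / 8) with (/ (8 / eps)) by (field; lra).
    apply Rlt_le, Rinv_lt_contravar; [apply Rmult_lt_0_compat|]; lra. }
  split; [exact Hinv|].
  pose proof (Rinv_r (tau eps) ltac:(lra)). nra.
Qed.

Lemma Rceil_ge (r : R) : r <= IZR (Rceil r).
Proof.
  unfold Rceil. rewrite opp_IZR. destruct (base_Int_part (- r)). lra.
Qed.

(* Above the threshold f0 there are at most (1 - alpha) n zeros, i.e.
   (z/n) tau <= ln(1 + 1/tau). *)
Lemma zeros_bound (eps : R) (n : nat) (x : list bool) :
  0 < tau eps -> (1 <= n)%nat -> length x = n ->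
  (f0 eps n <= Z.of_nat (onemax x))%Z ->
  / INR n * INR (zeros x) * tau eps <= ln (1 + / tau eps).
Proof.
  intros Ht Hn Hl Hf.
  assert (HnR : 1 <= INR n) by (apply (le_INR 1 n) in Hn; exact Hn).
  assert (Hk : alpha eps * INR n <= INR (onemax x)).
  { pose proof (Rceil_ge (alpha eps * INR n)).
    apply IZR_le in Hf. rewrite <- INR_IZR_INZ in Hf. unfold f0 in Hf. lra. }
  assert (Hsplit : INR (onemax x) + INR (zeros x) = INR n)
    by (rewrite <- plus_INR, onemax_plus_zeros, Hl; reflexivity).
  assert (Hz : INR (zeros x) * tau eps <= ln (1 + / tau eps) * INR n).
  { replace (ln (1 + / tau eps)) with ((1 - alpha eps) * tau eps)
      by (unfold alpha; field; lra).
    nra. }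
  apply (Rmult_le_reg_l (INR n)); [lra|].
  replace (INR n * (/ INR n * INR (zeros x) * tau eps))
    with (INR (zeros x) * tau eps) by (field; lra).
  lra.
Qed.

Theorem theorem4 (eps : R) (n : nat) (x : list bool) :
  0 < eps < 1 -> (1 <= n)%nat -> length x = n ->
  (f0 eps n <= Z.of_nat (onemax x))%Z ->
  expect_mut n (g eps n) x <= / exp 1 * (1 + eps) * g eps n x.
Proof.
  intros He Hn Hl Hf.
  destruct (inv_tau_small eps He) as [Hinv Ht1].
  assert (HnR : 1 <= INR n) by (apply (le_INR 1 n) in Hn; exact Hn).
  assert (Hp : 0 < / INR n <= 1).
  { split; [apply Rinv_0_lt_compat; lra|].
    rewrite <- Rinv_1. apply Rinv_le_contravar; lra. }
  assert (Hpn : / INR n * INR (onemax x + zeros x) = 1)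
    by (rewrite onemax_plus_zeros, Hl; field; lra).
  pose proof (mutation_factor_bound (tau eps) (/ INR n) (ln (1 + / tau eps))
    (onemax x) (zeros x) Ht1 Hp Hpn (zeros_bound eps n x ltac:(lra) Hn Hl Hf)) as Hfac.
  pose proof (final_constant_bound eps (/ tau eps) He Hinv) as Hconst.
  eapply Rle_trans; [apply expect_g_le; auto; lra|].
  rewrite (g_eq_pow eps n x) by (auto; lra).
  replace ((1 - / INR n) * tau eps + / INR n)
    with (tau eps * (1 - / INR n * (1 - / tau eps))) by (field; lra).
  replace (/ INR n * tau eps + (1 - / INR n))
    with (1 + / INR n * (tau eps - 1)) by ring.
  rewrite Rpow_mult_distr.
  assert (0 < powerRZ (tau eps) (- f0 eps n) * tau eps ^ onemax x)
    by (apply Rmult_lt_0_compat; [apply powerRZ_lt | apply pow_lt]; lra).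
  nra.
Qed.
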